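(* Let $1\le k<n$. Every RYD in $\mathbb{Y}_{OG(k,2n)}$ is a $W^{OG(k,2n)}$-diagram, i.e. $\mathbb{Y}_{OG(k,2n)}\subseteq\Theta(k,2n)$.
   Context: Root system $D_n$: positive roots $e_a\pm e_b$ ($a<b$); simple roots $e_i-e_{i+1}$ ($i<n$), $e_{n-1}+e_n$; order $\alpha\le\beta$ iff $\beta-\alpha$ is a nonnegative integer combination of simple roots. $W^{OG(k,2n)}$ is the set of signed permutations $w=(y_1,\dots,y_{k-r},\overline{z_r},\dots,\overline{z_1},v_1,\dots,v_{n-k-1},\widehat{v_{n-k}})$ of $1,\dots,n$ with an even number of barred (negative) entries, $0\le r\le k$, $y_1<\dots<y_{k-r}$, $z_r>\dots>z_1$, $v_1<\dots<v_{n-k}$, $\widehat{v_{n-k}}\in\{v_{n-k},\overline{v_{n-k}}\}$ according to the parity of $r$. $w$ acts by $e_a\mapsto\pm e_{|w(a)|}$ (minus if barred); $\mathrm{Inv}(w)$ is the set of positive roots sent to negative roots, and $\mathbb{Y}_{OG(k,2n)}=\{\mathrm{Inv}(w)\}$. Base region: roots $e_a\pm e_b$ with $a\le k<b$; its $i$-th double-tailed diamond ($1\le i\le k$) consists of the $2n-2k$ roots $e_{k+1-i}\pm e_b$, $b>k$. Top region: roots $e_a+e_b$ with $a<b\le k$. A subset $S$ of the union of the two regions is a $W^{OG(k,2n)}$-diagram if it meets each region in a lower order ideal of that region and, for each top root $e_a+e_b$, $e_a+e_b\in S$ whenever $S$ contains more than $2n-2k$ roots of the double-tailed diamonds indexed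 by $a$ and $b$ (i.e. diamonds $k+1-a$ and $k+1-b$) combined, and $e_a+e_b\notin S$ whenever it contains fewer than $2n-2k$ of them. $\Theta(k,2n)$ is the set of such diagrams. *)

(* Conventions: coordinates/positions are 0-indexed internally:
   coordinate i : 'I_n stands for e_{i+1}; position a (0-indexed) of a signed
   permutation stands for position a+1. Entries of w are the (signed) values
   +-1..+-n as in the paper. *)
From HB Require Import structures.
From mathcomp Require Import all_boot all_order all_algebra.
Set Implicit Arguments. Unset Strict Implicit. Unset Printing Implicit Defensive.
Import Order.TTheory GRing.Theory Num.Theory.
Local Open Scope ring_scope.

(* a root candidate (a, b, plus): e_a + e_b if plus, e_a - e_b otherwise *)
Definition root (n : nat) := ('I_n * 'I_n * bool)%type.

Definition vec (n : nat) := {ffun 'I_n -> int}.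

Definition evec (n : nat) (p : nat) : vec n := [ffun i : 'I_n => ((i : nat) == p)%:R].

Definition rootvec (n : nat) (r : root n) : vec n :=
  if r.2 then evec n r.1.1 + evec n r.1.2 else evec n r.1.1 - evec n r.1.2.

Definition posroots (n : nat) : {set root n} := [set r : root n | r.1.1 < r.1.2]%N.

Definition simplevec (n : nat) (j : 'I_n) : vec n :=
  if (j.+1 < n)%N then evec n j - evec n j.+1 else evec n (n - 2) + evec n (n - 1).

Definition root_le (n : nat) (beta alpha : root n) : Prop :=
  exists c : 'I_n -> nat,
    rootvec alpha = rootvec beta + \sum_(j < n) simplevec j *+ c j.

(* signed permutation given as the sequence of its (signed) entries w(1..n);
   the linear action e_a |-> sgn(w(a)) e_{|w(a)|} *)
Definition act (n : nat) (w : seq int) (v : vec n) : vec n :=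
  [ffun p : 'I_n => \sum_(a < n)
      sgz (nth (0:int) w a) * ((`|nth (0:int) w a|%N == p.+1)%:R) * v a].

Definition is_negroot (n : nat) (v : vec n) : bool :=
  [exists r in posroots n, rootvec r == - v].

Definition Inv (n : nat) (w : seq int) : {set root n} :=
  [set r in posroots n | is_negroot (act w (rootvec r))].

Definition in_WOG (n k : nat) (w : seq int) : Prop :=
  [/\ size w = n,
      perm_eq [seq `|x|%N | x <- w] (iota 1 n),
      ~~ odd (count (fun x : int => x < 0) w) &
      exists r : nat, (r <= k)%N /\
        let ys := take (k - r) w in
        let zs := take r (drop (k - r) w) in
        let vs := drop k w in
        [/\ all (fun x : int => 0 < x) ys /\ sorted ltn [seq `|x|%N | x <- ys],
            all (fun x : int => x < 0) zs /\ sorted gtn [seq `|x|%N | x <- zs],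
            all (fun x : int => 0 < x) (take (n - k - 1) vs),
            sorted ltn [seq `|x|%N | x <- vs] &
            (last (0:int) vs < 0) = odd r]].

(* regions (1-indexed: base a <= k < b; top e_a + e_b, a < b <= k) *)
Definition base_region (n k : nat) : {set root n} :=
  [set r : root n | (r.1.1 < k <= r.1.2)%N].
Definition top_region (n k : nat) : {set root n} :=
  [set r : root n | r.2 && (r.1.1 < r.1.2 < k)%N].

(* roots e_a +- e_c with c > k: the double-tailed diamond indexed k+1-a *)
Definition diamond_of (n k : nat) (a : 'I_n) : {set root n} :=
  [set r : root n | (r.1.1 == a) && (k <= r.1.2)%N].

Definition lower_ideal_in (n : nat) (R S : {set root n}) : Prop :=
  forall alpha beta, alpha \in R -> beta \in R ->
    alpha \in S -> root_le beta alpha -> beta \in S.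

Definition is_Wdiagram (n k : nat) (S : {set root n}) : Prop :=
  [/\ S \subset base_region n k :|: top_region n k,
      lower_ideal_in (base_region n k) S,
      lower_ideal_in (top_region n k) S &
      forall t, t \in top_region n k ->
        let cnt := #|S :&: (diamond_of k t.1.1 :|: diamond_of k t.1.2)| in
        ((2 * n - 2 * k < cnt)%N -> t \in S) /\
        ((cnt < 2 * n - 2 * k)%N -> t \notin S)].

Definition in_Theta (n k : nat) (S : {set root n}) : Prop := is_Wdiagram k S.

From Pilot Require Import Defs.
From HB Require Import structures.
From mathcomp Require Import all_boot all_order all_algebra zify.
Set Implicit Arguments. Unset Strict Implicit. Unset Printing Implicit Defensive.
Import Order.TTheory GRing.Theory Num.Theory.
Local Open Scope ring_scope.

(* Whether a positive root e_i +- e_j (i < j) is an inversion of a signed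
   permutation w is decided by whichever of w(i), w(j) has the smaller absolute
   value: that entry must be negative (for w(j), with its sign flipped on e_i - e_j).
   For w in W^{OG(k,2n)}, written y | z | v (positive and increasing, negative and
   decreasing in absolute value, positive and increasing up to the sign of the last
   entry), this test becomes monotone: no inversion has both indices beyond k, the
   inverted top roots are the e_a + e_b with |w(b)| < |w(a)|, and the root order is
   controlled by linear functionals that are nonnegative on simple roots (prefix
   sums and the functional (1,...,1,-1)), which gives both ideal conditions. For
   the count, each of the n - k columns e_a +- e_c, e_b +- e_c (c > k) of the two
   diamonds holds at least two inversions when e_a + e_b is one, at most two
   otherwise. *)

Definition signed_pair n (P Q : nat) (al be : int) : vec n :=
  [ffun p : 'I_n => (if p == P :> nat then al else 0) + (if p == Q :> nat then be else 0)].

Definition sign (s : bool) : int := if s then 1 else -1.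

Section SignedPair.
Variable n : nat.
Implicit Types (P Q a b : 'I_n) (al be ga de : int).

Lemma rootvec_signed_pair (r : Defs.root n) :
  rootvec r = signed_pair n r.1.1 r.1.2 1 (sign r.2).
Proof.
apply/ffunP => p; rewrite /rootvec /sign !ffunE.
by case: r.2; rewrite !ffunE /=; do 2 case: eqP => _.
Qed.

Lemma signed_pairN P Q al be :
  - signed_pair n P Q al be = signed_pair n P Q (- al) (- be).
Proof. by apply/ffunP => p; rewrite !ffunE opprD; do 2 case: eqP; rewrite ?oppr0. Qed.

Lemma signed_pairC P Q al be : signed_pair n P Q al be = signed_pair n Q P be al.
Proof. by apply/ffunP => p; rewrite !ffunE addrC. Qed.

Lemma signed_pair_fst P Q al be : P != Q -> signed_pair n P Q al be P = al.
Proof. by move=> nePQ; rewrite ffunE eqxx ifF ?addr0 //; apply/negbTE. Qed.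

Lemma signed_pair_supp P Q al be (p : 'I_n) :
  signed_pair n P Q al be p != 0 -> p = P \/ p = Q.
Proof.
rewrite ffunE; have [->|/negbTE nepP] := eqVneq p P; first by left.
have [->|/negbTE nepQ] := eqVneq p Q; first by right.
by rewrite [p == P :> nat]nepP [p == Q :> nat]nepQ addr0 eqxx.
Qed.

Lemma signed_pair_lead P Q a b al be ga de :
  (a < b)%N -> (P < Q)%N -> al != 0 -> ga != 0 ->
  signed_pair n a b al be = signed_pair n P Q ga de -> a = P /\ al = ga.
Proof.
move=> ltab ltPQ al0 ga0 E.
have neab : a != b by rewrite neq_ltn ltab.
have nePQ : P != Q by rewrite neq_ltn ltPQ.
have Ea := signed_pair_fst al be neab; have EP := signed_pair_fst ga de nePQ.
have [aP|aQ] : a = P \/ a = Q by apply: (@signed_pair_supp P Q ga de); rewrite -E Ea.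
  by split=> //; rewrite -Ea E aP EP.
have [Pa|Pb] : P = a \/ P = b by apply: (@signed_pair_supp a b al be); rewrite E EP.
  by move: ltPQ; rewrite -aQ Pa ltnn.
by move: ltab ltPQ; rewrite -aQ -Pb => /ltn_trans H /H; rewrite ltnn.
Qed.

Lemma is_negroot_signed_pair_lt P Q al be :
  (P < Q)%N -> `|al| = 1 -> `|be| = 1 -> is_negroot (signed_pair n P Q al be) = (al == -1).
Proof.
move=> ltPQ al1 be1; apply/existsP/eqP => [[r]|alN1].
  rewrite inE => /andP [ltr /eqP]; rewrite rootvec_signed_pair signed_pairN.
  case/signed_pair_lead => // [|_]; last lia.
  by rewrite oppr_eq0 -normr_eq0 al1.
exists ((P, Q), be == -1); rewrite inE /= ltPQ /=; apply/eqP.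
rewrite rootvec_signed_pair signed_pairN alN1 opprK /=; congr signed_pair.
by rewrite /sign; case: eqP => [->|]; rewrite ?opprK //; lia.
Qed.

Lemma is_negroot_signed_pair P Q al be : P != Q -> `|al| = 1 -> `|be| = 1 ->
  is_negroot (signed_pair n P Q al be) = if (P < Q)%N then al == -1 else be == -1.
Proof.
move=> nePQ al1 be1; case: ltnP => [ltPQ|lePQ]; first exact: is_negroot_signed_pair_lt.
rewrite signed_pairC is_negroot_signed_pair_lt //.
by rewrite ltn_neqAle lePQ andbT eq_sym.
Qed.

End SignedPair.

Section Weights.
Variables (n : nat) (wt : nat -> int).

Definition weigh (v : vec n) : int := \sum_(p < n) wt p * v p.

Lemma weigh_is_zmod_morphism : zmod_morphism weigh.
Proof.
by move=> u v; rewrite /weigh -sumrB; apply: eq_bigr => p _; rewrite !ffunE mulrBr.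
Qed.

HB.instance Definition _ := GRing.isZmodMorphism.Build (vec n) int weigh weigh_is_zmod_morphism.

Lemma weigh_evec q : (q < n)%N -> weigh (evec n q) = wt q.
Proof.
move=> ltqn; rewrite /weigh (bigD1 (Ordinal ltqn)) //= big1 => [|p /negbTE nepq].
  by rewrite ffunE eqxx mulr1 addr0.
by rewrite ffunE [_ == q]nepq mulr0.
Qed.

Lemma weigh_rootvec (r : Defs.root n) : weigh (rootvec r) = wt r.1.1 + sign r.2 * wt r.1.2.
Proof.
rewrite /rootvec /sign; case: r.2; rewrite ?raddfB ?raddfD /=.
all: by rewrite !weigh_evec ?mulN1r ?mul1r ?ltn_ord.
Qed.

Lemma weigh_root_le (be al : Defs.root n) :
  (forall j, 0 <= weigh (simplevec j)) -> root_le be al -> weigh (rootvec be) <= weigh (rootvec al).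
Proof.
move=> simple_ge0 [c ->]; rewrite raddfD raddf_sum lerDl.
by apply: sumr_ge0 => j _; rewrite raddfMn mulrn_wge0.
Qed.

End Weights.

Definition prefix_weight (m p : nat) : int := (p < m)%:R.

Definition last_negative_weight (n p : nat) : int := if (p < n.-1)%N then 1 else -1.

Lemma prefix_weight_simple n m (j : 'I_n) : 0 <= weigh (prefix_weight m) (simplevec j).
Proof.
have := ltn_ord j; rewrite /simplevec /prefix_weight.
by case: ifP => ltjn ltj; rewrite ?raddfB ?raddfD /= !weigh_evec; lia.
Qed.

Lemma last_negative_weight_simple n (j : 'I_n) :
  (2 <= n)%N -> 0 <= weigh (last_negative_weight n) (simplevec j).
Proof.
have := ltn_ord j; rewrite /simplevec /last_negative_weight.
by case: ifP => ltjn ltj n_ge2; rewrite ?raddfB ?raddfD /= !weigh_evec; do ?case: ifP; lia.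
Qed.

Section RootOrder.
Variables (n : nat) (a b a' b' : 'I_n) (s s' : bool).
Hypotheses (ltab : (a < b)%N) (ltab' : (a' < b')%N).
Hypothesis le_roots : root_le ((a', b'), s') ((a, b), s).

Let prefix_le m :
  prefix_weight m a' + sign s' * prefix_weight m b' <= prefix_weight m a + sign s * prefix_weight m b.
Proof. by have := weigh_root_le (@prefix_weight_simple n m) le_roots; rewrite !weigh_rootvec. Qed.

Lemma root_le_fst : (a <= a')%N.
Proof. by have := prefix_le a'.+1; rewrite /prefix_weight /sign; case: s; case: s'; lia. Qed.

Lemma root_le_minus : ~~ s -> ~~ s'.
Proof.
have := ltn_ord a; have := ltn_ord b; have := ltn_ord a'; have := ltn_ord b'.
by have := prefix_le n; rewrite /prefix_weight /sign; case: s; case: s'; lia.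
Qed.

Lemma root_le_minus_snd : ~~ s -> (a' <= b)%N -> (b' <= b)%N.
Proof.
move=> minus_al; have := root_le_minus minus_al; have := prefix_le b.+1.
by rewrite /prefix_weight /sign; move: minus_al; case: s; case: s'; lia.
Qed.

Lemma root_le_plus_snd : s -> s' -> (b <= b')%N.
Proof. by have := prefix_le b'.+1; rewrite /prefix_weight /sign; case: s; case: s'; lia. Qed.

Lemma root_le_plus_last : s -> ~~ s' -> (b : nat) = n.-1 -> (b' : nat) != n.-1.
Proof.
have n_ge2 : (2 <= n)%N by have := ltn_ord b; lia.
have := weigh_root_le (fun j => last_negative_weight_simple j n_ge2) le_roots.
by rewrite !weigh_rootvec /last_negative_weight /sign /=; do ?case: ifP; case: s; case: s'; lia.
Qed.

End RootOrder.

Definition abs_at (w : seq int) (i : nat) : nat := absz w`_i.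

Lemma sum_if_eq n (F : 'I_n -> int) (i : 'I_n) (x : int) :
  \sum_(a < n) F a * (if a == i :> nat then x else 0) = F i * x.
Proof.
rewrite (bigD1 i) //= eqxx big1 ?addr0 // => a nai.
by rewrite ifF ?mulr0 //; apply/negbTE.
Qed.

Lemma sgz_mul_eq_succ (x c : int) (p : nat) :
  sgz x * (`|x|%N == p.+1)%:R * c = if p == (absz x).-1 then sgz x * c else 0.
Proof. by do 2 case: eqP => /=; lia. Qed.

Lemma act_signed_pair n (w : seq int) (i j : 'I_n) al be :
  act w (signed_pair n i j al be) =
  signed_pair n (abs_at w i).-1 (abs_at w j).-1 (sgz w`_i * al) (sgz w`_j * be).
Proof.
apply/ffunP => p; rewrite !ffunE.
under eq_bigr do rewrite ffunE mulrDr.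
by rewrite big_split /= !sum_if_eq !sgz_mul_eq_succ.
Qed.

(* For i < j, membership of e_i + e_j (s = true) or e_i - e_j in [Inv n w]; see [mem_Inv]. *)
Definition inverted (w : seq int) (i j : nat) (s : bool) : bool :=
  if (abs_at w i < abs_at w j)%N then w`_i < 0 else (w`_j < 0) == s.

Lemma inverted_true_false (w : seq int) i c :
  (inverted w i c true + inverted w i c false)%N =
  if (abs_at w i < abs_at w c)%N then double (w`_i < 0)%R else 1%N.
Proof. by rewrite /inverted; case: ifP => _; [case: (w`_i < 0) | case: (w`_c < 0)]. Qed.

Lemma card_pairs_sum (I J : finType) (C : {set I * J}) :
  #|C| = (\sum_i \sum_j ((i, j) \in C))%N.
Proof. by rewrite -sum1_card big_mkcond pair_bigA; apply: eq_bigr => -[i j]. Qed.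

Section SignedPermutation.
Variables (n : nat) (w : seq int).
Hypothesis abs_w : perm_eq [seq `|x|%N | x <- w] (iota 1 n).

Lemma size_signed_perm : size w = n.
Proof. by rewrite -(size_map absz) (perm_size abs_w) size_iota. Qed.

Lemma abs_at_bounds i : (i < n)%N -> (0 < abs_at w i <= n)%N.
Proof.
move=> ltin; rewrite -mem_iota -(perm_mem abs_w); apply/mapP.
by exists w`_i => //; rewrite mem_nth ?size_signed_perm.
Qed.

Lemma abs_at_neq i j : (i < n)%N -> (j < n)%N -> i != j -> abs_at w i != abs_at w j.
Proof.
have uniq_abs : uniq [seq `|x|%N | x <- w] by rewrite (perm_uniq abs_w) iota_uniq.
move=> ltin ltjn; rewrite -(nth_uniq 0%N _ _ uniq_abs) ?size_map ?size_signed_perm //.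
by rewrite !(nth_map 0) ?size_signed_perm.
Qed.

Lemma mem_Inv (i j : 'I_n) s : (((i, j), s) \in Inv n w) = (i < j)%N && inverted w i j s.
Proof.
rewrite inE /posroots inE /=; case: ltnP => //= ltij.
have /andP [wi0 win] := abs_at_bounds (ltn_ord i).
have /andP [wj0 wjn] := abs_at_bounds (ltn_ord j).
have neij : abs_at w i != abs_at w j by rewrite abs_at_neq // neq_ltn ltij.
have ltPn : ((abs_at w i).-1 < n)%N by rewrite prednK.
have ltQn : ((abs_at w j).-1 < n)%N by rewrite prednK.
have wi_neq0 : w`_i != 0 by rewrite -absz_gt0.
have wj_neq0 : w`_j != 0 by rewrite -absz_gt0.
rewrite rootvec_signed_pair act_signed_pair -[(abs_at w i).-1]/(Ordinal ltPn : nat).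
rewrite -[(abs_at w j).-1]/(Ordinal ltQn : nat) is_negroot_signed_pair /=; last 3 first.
- by rewrite -val_eqE /=; lia.
- by rewrite mulr1 normr_sgz wi_neq0.
- by rewrite normrM normr_sgz wj_neq0; case: s; rewrite /= ?normrN normr1.
have -> : ((abs_at w i).-1 < (abs_at w j).-1)%N = (abs_at w i < abs_at w j)%N by lia.
rewrite /inverted mulr1 sgz_cp0; case: ifP => // _.
case: s; first by rewrite mulr1 sgz_cp0.
by rewrite mulrN1 eqr_oppLR opprK sgz_cp0 lt_def wj_neq0 leNgt eqbF_neg.
Qed.

Lemma card_Inv_diamond k (a : 'I_n) : (a < k)%N ->
  #|Inv n w :&: diamond_of k a| = (\sum_(k <= c < n) (inverted w a c true + inverted w a c false))%N.
Proof.
move=> lt_ak; pose C := [set cs : 'I_n * bool | (k <= cs.1)%N && inverted w a cs.1 cs.2].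
have -> : Inv n w :&: diamond_of k a = [set ((a, cs.1), cs.2) | cs in C].
  apply/setP => -[[i c] s]; rewrite inE mem_Inv // !inE /=; apply/andP/imsetP.
    move=> [/andP [_ inv_ics] /andP [/eqP eq_ia le_kc]]; subst i.
    by exists (c, s); rewrite // inE /= le_kc.
  move=> [[c' s']]; rewrite inE /= => /andP [le_kc inv_acs] [-> -> ->].
  by rewrite eqxx le_kc inv_acs (leq_trans lt_ak le_kc).
rewrite card_imset; last by move=> [c1 s1] [c2 s2] [-> ->].
rewrite card_pairs_sum big_geq_mkord [RHS]big_mkcond.
by apply: eq_bigr => c _; rewrite big_bool !inE /=; case: leqP.
Qed.

End SignedPermutation.

Section Slices.
Variables (T : Type) (x0 : T) (s : seq T) (d m : nat).

Lemma nth_slice i : (d <= i)%N -> (i < d + m)%N ->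
  nth x0 (take m (drop d s)) (i - d) = nth x0 s i.
Proof. by move=> le_di lt_i; rewrite nth_take ?nth_drop ?subnKC //; lia. Qed.

Lemma all_slice_nth (P : pred T) i : all P (take m (drop d s)) ->
  (d <= i)%N -> (i < minn (d + m) (size s))%N -> P (nth x0 s i).
Proof.
move=> /all_nthP all_P le_di lt_i; rewrite -nth_slice //; last lia.
by apply: all_P; rewrite size_take size_drop; case: ifP; lia.
Qed.

Lemma sorted_slice_nth (leT : rel T) i j : transitive leT -> sorted leT (take m (drop d s)) ->
  (d <= i < j)%N -> (j < minn (d + m) (size s))%N -> leT (nth x0 s i) (nth x0 s j).
Proof.
move=> leT_tr sorted_slice /andP [le_di lt_ij] lt_j.
rewrite -!nth_slice //; try lia.
by apply: (sorted_ltn_nth leT_tr) => //; rewrite ?inE ?size_take ?size_drop; try case: ifP; lia.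
Qed.

End Slices.

Record wog_shape (n k r : nat) (w : seq int) : Prop := WogShape {
  abs_perm : perm_eq [seq `|x|%N | x <- w] (iota 1 n);
  y_pos : forall i, (i < k - r)%N -> 0 < w`_i;
  z_neg : forall i, (k - r <= i < k)%N -> w`_i < 0;
  v_pos : forall i, (k <= i < n.-1)%N -> 0 < w`_i;
  y_incr : forall i j, (i < j < k - r)%N -> (abs_at w i < abs_at w j)%N;
  z_decr : forall i j, (k - r <= i < j)%N -> (j < k)%N -> (abs_at w j < abs_at w i)%N;
  v_incr : forall i j, (k <= i < j)%N -> (j < n)%N -> (abs_at w i < abs_at w j)%N }.

Lemma in_WOG_shape n k w : (k < n)%N -> in_WOG n k w -> exists r, wog_shape n k r w.
Proof.
move=> ltkn [size_w abs_w _ [r [_ [[y_pos y_incr] [z_neg z_decr] v_pos v_incr _]]]].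
have nth_abs i : (i < n)%N -> abs_at w i = nth 0%N [seq `|x|%N | x <- w] i.
  by move=> ltin; rewrite (nth_map 0) ?size_w.
rewrite -[X in take _ X]drop0 in y_pos y_incr.
rewrite map_take map_drop in y_incr; rewrite map_take map_drop in z_decr.
rewrite map_drop -[drop k _]take_size in v_incr.
exists r; split=> // [i lt_i|i /andP [le_i lt_i]|i /andP [le_i lt_i]|i j /andP [lt_ij lt_j]|
                      i j /andP [le_i lt_ij] lt_j|i j /andP [le_i lt_ij] lt_j].
- by apply: (all_slice_nth 0 y_pos (i := i)); rewrite ?size_w; lia.
- by apply: (all_slice_nth 0 z_neg (i := i)); rewrite ?size_w; lia.
- by apply: (all_slice_nth 0 v_pos (i := i)); rewrite ?size_w; lia.
- rewrite !nth_abs; try lia.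
  by apply: (sorted_slice_nth _ ltn_trans y_incr); rewrite ?size_map ?size_w; lia.
- rewrite !nth_abs; try lia.
  have gtn_trans : transitive gtn by move=> ? ? ? lt1 lt2; exact: ltn_trans lt2 lt1.
  have := sorted_slice_nth 0%N gtn_trans z_decr (i := i) (j := j).
  by apply; rewrite ?size_map ?size_w; lia.
- rewrite !nth_abs; try lia.
  by apply: (sorted_slice_nth _ ltn_trans v_incr); rewrite ?size_drop ?size_map ?size_w; lia.
Qed.

Section WogInversions.
Variables (n k r : nat) (w : seq int).
Hypothesis shape : wog_shape n k r w.
Hypothesis ltkn : (k < n)%N.

Let abs_w := abs_perm shape.

Lemma wog_neg_top i : (i < k)%N -> (w`_i < 0) = (k - r <= i)%N.
Proof.
move=> ltik; case: leqP => [le_i|lt_i]; first by rewrite (z_neg shape) // le_i.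
by apply/negbTE; rewrite -leNgt ltW // (y_pos shape).
Qed.

Lemma wog_neg_tail i : (k <= i < n)%N -> (w`_i < 0) = (i == n.-1) && (w`_(n.-1) < 0).
Proof.
move=> /andP [le_ki lt_in]; case: eqP => [-> //|ne_i].
by apply/negbTE; rewrite -leNgt ltW // (v_pos shape) // le_ki; lia.
Qed.

Lemma wog_abs_y_le i j : (i <= j)%N -> (j < k - r)%N -> (abs_at w i <= abs_at w j)%N.
Proof.
rewrite leq_eqVlt => /orP [/eqP -> //|lt_ij] lt_j.
by apply: ltnW; apply: (y_incr shape); rewrite lt_ij.
Qed.

Lemma wog_abs_z_le i j : (k - r <= i)%N -> (i <= j < k)%N -> (abs_at w j <= abs_at w i)%N.
Proof.
move=> le_i /andP []; rewrite leq_eqVlt => /orP [/eqP -> //|lt_ij] lt_j.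
by apply: ltnW; apply: (z_decr shape) => //; rewrite le_i.
Qed.

Lemma wog_abs_v_le i j : (k <= i)%N -> (i <= j < n)%N -> (abs_at w i <= abs_at w j)%N.
Proof.
move=> le_i /andP []; rewrite leq_eqVlt => /orP [/eqP -> //|lt_ij] lt_j.
by apply: ltnW; apply: (v_incr shape) => //; rewrite le_i.
Qed.

Lemma wog_top_ascent i j : (i < j < k)%N -> (abs_at w i < abs_at w j)%N -> ~~ (w`_i < 0).
Proof.
move=> /andP [lt_ij lt_jk] lt_abs; rewrite wog_neg_top; last exact: ltn_trans lt_jk.
by apply: contraTN lt_abs => le_i; rewrite -leqNgt wog_abs_z_le // (ltnW lt_ij).
Qed.

Lemma wog_top_descent i j : (i < j < k)%N -> (abs_at w j < abs_at w i)%N -> w`_j < 0.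
Proof.
move=> /andP [lt_ij lt_jk] lt_abs; rewrite wog_neg_top //.
by rewrite leqNgt; apply: contraTN lt_abs => lt_j; rewrite -leqNgt wog_abs_y_le // (ltnW lt_ij).
Qed.

Lemma wog_inverted_top_minus i j : (i < j < k)%N -> ~~ inverted w i j false.
Proof.
move=> /andP [lt_ij lt_jk]; rewrite /inverted; case: ltngtP => [lt_abs|gt_abs|/eqP eq_abs].
- by apply: wog_top_ascent lt_abs; rewrite lt_ij.
- by rewrite (wog_top_descent _ gt_abs) ?lt_ij.
- by move: eq_abs; rewrite (negbTE (@abs_at_neq n w abs_w i j _ _ _)) // ?neq_ltn ?lt_ij //; lia.
Qed.

Lemma wog_inverted_top_plus i j :
  (i < j < k)%N -> inverted w i j true = (abs_at w j < abs_at w i)%N.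
Proof.
move=> ijk; have := wog_inverted_top_minus ijk; rewrite /inverted.
case: ltngtP => [_ /negbTE //|_|/eqP eq_abs]; first by rewrite eqbF_neg negbK eqb_id => ->.
by move: eq_abs; rewrite (negbTE (@abs_at_neq n w abs_w i j _ _ _)) // ?neq_ltn; lia.
Qed.

Lemma wog_inverted_tail i j s : (k <= i < j)%N -> (j < n)%N -> ~~ inverted w i j s.
Proof.
move=> /andP [le_ki lt_ij] lt_jn; rewrite /inverted (v_incr shape) ?le_ki //.
by rewrite -leNgt ltW // (v_pos shape) // le_ki; lia.
Qed.

Lemma Inv_wog_sub : Inv n w \subset base_region n k :|: top_region n k.
Proof.
apply/subsetP => -[[i j] s]; rewrite mem_Inv // => /andP [lt_ij inv_ijs].
rewrite !inE /=; case: (ltnP i k) => [lt_ik|le_ki]; last first.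
  by rewrite (negbTE (@wog_inverted_tail i j s _ _)) ?le_ki in inv_ijs.
case: (ltnP j k) => [lt_jk|//].
case: s inv_ijs => [_|inv_ij]; first by rewrite lt_ij.
by rewrite (negbTE (@wog_inverted_top_minus i j _)) ?lt_ij in inv_ij.
Qed.

Lemma Inv_wog_top_ideal : lower_ideal_in (top_region n k) (Inv n w).
Proof.
move=> [[a b] s] [[a' b'] s']; rewrite !mem_Inv // !inE /=.
move=> /andP [-> /andP [lt_ab lt_bk]] /andP [-> /andP [lt_ab' lt_bk']] /andP [_ inv_ab] le_ab.
rewrite lt_ab' /= wog_inverted_top_plus ?lt_ab' //.
rewrite wog_inverted_top_plus ?lt_ab // in inv_ab.
have le_aa' := root_le_fst lt_ab lt_ab' le_ab.
have le_bb' := root_le_plus_snd lt_ab lt_ab' le_ab isT isT.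
have b_neg := wog_top_descent (introT andP (conj lt_ab lt_bk)) inv_ab.
rewrite wog_neg_top // in b_neg.
have abs_bb' := wog_abs_z_le b_neg (introT andP (conj le_bb' lt_bk')).
case: (ltnP a' (k - r)) => [lt_a'|le_a'].
  by have := wog_abs_y_le le_aa' lt_a'; lia.
by apply: (z_decr shape); rewrite ?le_a'.
Qed.

Lemma Inv_wog_base_ideal : lower_ideal_in (base_region n k) (Inv n w).
Proof.
move=> [[a b] s] [[a' b'] s']; rewrite !mem_Inv // !inE /=.
move=> /andP [lt_ak le_kb] /andP [lt_a'k le_kb'] /andP [_ inv_ab] le_ab.
have lt_ab : (a < b)%N by exact: leq_trans lt_ak le_kb.
have lt_ab' : (a' < b')%N by exact: leq_trans lt_a'k le_kb'.
rewrite lt_ab' /=.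
have le_aa' := root_le_fst lt_ab lt_ab' le_ab.
have y_aa' : (a' < k - r)%N -> (abs_at w a <= abs_at w a')%N := wog_abs_y_le le_aa'.
have z_aa' : (k - r <= a)%N -> (abs_at w a' <= abs_at w a)%N.
  by move=> le_a; apply: wog_abs_z_le => //; rewrite le_aa'.
have v_bb' : (b <= b')%N -> (abs_at w b <= abs_at w b')%N.
  by move=> le_bb'; apply: wog_abs_v_le => //; rewrite le_bb' ltn_ord.
have v_b'b : (b' <= b)%N -> (abs_at w b' <= abs_at w b)%N.
  by move=> le_b'b; apply: wog_abs_v_le => //; rewrite le_b'b ltn_ord.
have ne_ab : abs_at w a != abs_at w b by rewrite (abs_at_neq abs_w) // neq_ltn lt_ab.
have ne_ab' : abs_at w a' != abs_at w b' by rewrite (abs_at_neq abs_w) // neq_ltn lt_ab'.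
have lt_bn := ltn_ord b; have lt_b'n := ltn_ord b'.
move: inv_ab; rewrite /inverted (wog_neg_top lt_ak) (wog_neg_top lt_a'k).
rewrite (wog_neg_tail (i := b)) ?le_kb // (wog_neg_tail (i := b')) ?le_kb' //.
have := root_le_plus_snd lt_ab lt_ab' le_ab; have := root_le_plus_last lt_ab lt_ab' le_ab.
have := root_le_minus lt_ab lt_ab' le_ab; have := root_le_minus_snd lt_ab lt_ab' le_ab.
(* Every sign is now positional except that of the last entry: the rest is arithmetic. *)
case: s s' {le_ab} => [] [].
all: case: (ltnP (abs_at w a) (abs_at w b)); case: (ltnP (abs_at w a') (abs_at w b')).
all: by case: (w`_(n.-1) < 0); rewrite ?andbT ?andbF ?eqb_id ?eqbF_neg; lia.
Qed.

Lemma wog_diamond_column_ge a b c : (a < b < k)%N -> (abs_at w b < abs_at w a)%N ->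
  (2 <= inverted w a c true + inverted w a c false + (inverted w b c true + inverted w b c false))%N.
Proof.
move=> abk lt_ba; rewrite !inverted_true_false (wog_top_descent abk lt_ba).
by case: ifP; case: ifP; case: (w`_a < 0); lia.
Qed.

Lemma wog_diamond_column_le a b c : (a < b < k)%N -> (abs_at w a < abs_at w b)%N ->
  (inverted w a c true + inverted w a c false + (inverted w b c true + inverted w b c false) <= 2)%N.
Proof.
move=> abk lt_ab; rewrite !inverted_true_false (negbTE (wog_top_ascent abk lt_ab)).
by case: ifP; case: ifP; case: (w`_b < 0); lia.
Qed.

Lemma Inv_wog_diamond_count t : t \in top_region n k ->
  let cnt := #|Inv n w :&: (diamond_of k t.1.1 :|: diamond_of k t.1.2)| in
  ((2 * n - 2 * k < cnt)%N -> t \in Inv n w) /\ ((cnt < 2 * n - 2 * k)%N -> t \notin Inv n w).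
Proof.
case: t => [[a b] s]; rewrite inE /= => /andP [-> /andP [lt_ab lt_bk]].
have abk : (a < b < k)%N by rewrite lt_ab.
have disj : #|(Inv n w :&: diamond_of k a) :&: (Inv n w :&: diamond_of k b)| = 0%N.
  apply/eqP; rewrite cards_eq0; apply/eqP/setP => -[[i c] s']; rewrite !inE /=.
  case: eqP => [->|_]; last by rewrite !andbF.
  by apply/and4P => -[_ _ /eqP eq_ab _]; move: lt_ab; rewrite eq_ab ltnn.
have two_sum : (2 * n - 2 * k = \sum_(k <= c < n) 2)%N by rewrite sum_nat_const_nat; lia.
rewrite /= (setIUr (Inv n w)) cardsU disj subn0.
rewrite !card_Inv_diamond ?(ltn_trans lt_ab) // -big_split /=.
rewrite mem_Inv // lt_ab /= wog_inverted_top_plus // two_sum.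
case: (ltngtP (abs_at w a) (abs_at w b)) => [lt_abs|lt_abs|/eqP eq_abs]; split=> // bound.
- have := @leq_sum _ (index_iota k n) xpredT _ _ (fun c _ => wog_diamond_column_le c abk lt_abs).
  by rewrite leqNgt bound.
- have := @leq_sum _ (index_iota k n) xpredT _ _ (fun c _ => wog_diamond_column_ge c abk lt_abs).
  by rewrite leqNgt bound.
- by move: eq_abs; rewrite (negbTE (@abs_at_neq n w abs_w a b _ _ _)) // neq_ltn lt_ab.
Qed.

End WogInversions.

Theorem lemma3p13 (n k : nat) (hk1 : (1 <= k)%N) (hkn : (k < n)%N) (w : seq int) :
  in_WOG n k w -> in_Theta k (Inv n w).
Proof.
move=> /(in_WOG_shape hkn) [r shape]; split.
- exact: Inv_wog_sub shape hkn.
- exact: Inv_wog_base_ideal shape hkn.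
- exact: Inv_wog_top_ideal shape hkn.
- exact: Inv_wog_diamond_count shape hkn.
Qed.
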